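(* Consider the hierarchical Gaussian $K$-armed bandit and the algorithm HierTS described in the context. Let $c > 0$ be a constant such that $c\, \hat{\sigma}_{t,i}^{-2} \geq \hat{\sigma}_{t+1,i}^{-2}$ holds for every node $i \in \mathcal{V}$ and every round $t$. Fix any round $t$ and let $\psi_t = (\psi_t(1), \dots, \psi_t(L_t))$ be the list of nodes on the path from the root $\psi_t(1) = 1$ to the action node $\psi_t(L_t) = A_t$. Then for every $i \in [L_t]$, \[ \hat{\sigma}_{t+1, \psi_t(i)}^{-2} - \hat{\sigma}_{t, \psi_t(i)}^{-2} \geq c^{i - L_t} \bigg(\prod_{j=i+1}^{L_t} \frac{\hat{\sigma}_{t, \psi_t(j)}^4}{\sigma_{0, \psi_t(j)}^4}\bigg) \sigma^{-2}\,. \]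
   Context: Tree and model. Let $\mathcal{T}$ be a rooted tree with node set $\mathcal{V}$, root labeled $1$, in which every internal node has at least $2$ children. For a node $i \neq 1$, $\mathsf{pa}(i)$ is its parent; $\mathsf{ch}(i)$ is the set of children of $i$. The leaves form the action set $\mathcal{A}$, $|\mathcal{A}| = K$. Node parameters $\theta_{*, i} \in \mathbb{R}$ are generated as $\theta_{*, 1} \sim \mathcal{N}(\mu_1, \sigma_{0,1}^2)$ and, for $i \neq 1$, $\theta_{*, i} \mid \theta_{*, \mathsf{pa}(i)} \sim \mathcal{N}(\theta_{*, \mathsf{pa}(i)}, \sigma_{0,i}^2)$, with known $\mu_1$ and $\sigma_{0,i} > 0$. In each round $t$ the agent takes $A_t \in \mathcal{A}$ and observes $Y_t \sim \mathcal{N}(\theta_{*, A_t}, \sigma^2)$ (independent noise, known $\sigma > 0$). The history is $H_t = (A_\ell, Y_\ell)_{\ell < t}$. HierTS samples $\Theta_t$ exactly from the posterior of $(\theta_{*,i})_{i \in \mathcal{V}}$ given $H_t$ and takes $A_t = \arg\max_{a \in \mathcal{A}} \theta_{t,a}$. Conditional posterior variances. For a node $i \neq 1$, $\hat{\sigma}_{t,i}^2$ is the variance of $\theta_{*, i}$ conditioned on $H_t$ and on $\theta_{*, \mathsf{pa}(i)}$ (it does not depend on the parent's value); for the root, $\hat{\sigma}_{t,1}^2 = \mathrm{Var}(\theta_{*,1} \mid H_t)$. Explicitly, with $\mathcal{S}_{t,a} = \{\ell < t : A_\ell = a\}$: for an action node $a$, $\hat{\sigma}_{t,a}^{-2} =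 \sigma_{0,a}^{-2} + |\mathcal{S}_{t,a}| \sigma^{-2}$; for a non-action node $i$, $\hat{\sigma}_{t,i}^{-2} = \sigma_{0,i}^{-2} + \sum_{j \in \mathsf{ch}(i)} \tilde{\sigma}_{t,j}^{-2}$, where recursively $\tilde{\sigma}_{t,j}^{2} = \sigma_{0,j}^2 + \sigma^2/|\mathcal{S}_{t,j}|$ for an action node $j$ (with $\tilde{\sigma}_{t,j}^{-2} = 0$ if $|\mathcal{S}_{t,j}| = 0$) and $\tilde{\sigma}_{t,j}^{2} = \sigma_{0,j}^2 + \big(\sum_{k \in \mathsf{ch}(j)} \tilde{\sigma}_{t,k}^{-2}\big)^{-1}$ for a non-action node $j$. *)

From mathcomp Require Import all_boot all_order all_algebra.
Set Implicit Arguments. Unset Strict Implicit. Unset Printing Implicit Defensive.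
Import Order.TTheory GRing.Theory Num.Theory.
Local Open Scope ring_scope.

Section HierTree.
Variables (R : realFieldType) (V : finType) (root : V) (pa : V -> V).

Definition ch (i : V) : {set V} := [set j | (j != root) && (pa j == i)].

(* action nodes = leaves *)
Definition is_leaf (i : V) : bool := ch i == set0.

(* rooted tree: every node reaches the root by iterating the parent map,
   and the root is its own (dummy) parent *)
Definition is_rooted_tree : Prop :=
  pa root = root /\ forall i : V, exists k : nat, iter k pa i = root.

Definition internal_ge2 : Prop :=
  forall i : V, ~~ is_leaf i -> (1 < #|ch i|)%N.

Variables (s0 : V -> R) (s : R).
(* s0 i = sigma_{0,i}^2 (prior variances),  s = sigma^2 (noise variance),
   n a = |S_{t,a}| (number of pulls of action a). *)

(* tilde sigma_{t,j}^{-2}, by structural recursion on a fuel k; with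
   k = #|V| the fuel is never exhausted on a tree.  Convention: a node whose
   subtree has no observation has tilde precision 0 (infinite variance). *)
Fixpoint tprec (n : V -> nat) (k : nat) (j : V) : R :=
  match k with
  | O => 0
  | k'.+1 =>
    if is_leaf j then
      (if n j == 0%N then 0 else (s0 j + s / (n j)%:R)^-1)
    else
      let S := \sum_(l in ch j) tprec n k' l in
      if S == 0 then 0 else (s0 j + S^-1)^-1
  end.

(* hat sigma_{t,i}^{-2} : conditional posterior precision *)
Definition hprec (n : V -> nat) (i : V) : R :=
  if is_leaf i then (s0 i)^-1 + (n i)%:R / s
  else (s0 i)^-1 + \sum_(j in ch i) tprec n #|V| j.

End HierTree.

Definition pulls (V : finType) (A : nat -> V) (t : nat) (a : V) : nat :=
  \sum_(l < t) (A l == a).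

From mathcomp Require Import all_boot all_order all_algebra.
From mathcomp Require Import ring lra zify.
Import Order.TTheory GRing.Theory Num.Theory.
Set Implicit Arguments. Unset Strict Implicit. Unset Printing Implicit Defensive.

(* Write h_j for the conditional precision of node j before the pull of A_t and
   h'_j after it.  The tilde precision of j equals s0_j^-1 - (s0_j^2 h_j)^-1.  Only
   the child psi(i+1) of psi(i) has A_t below it, so psi(i) gains exactly what the
   tilde precision of psi(i+1) gains, namely (h' - h) / (s0^2 h h'), which is at
   least c^-1 (h^-1 / s0)^2 (h' - h) because h' <= c h.  The leaf gains s^-1, and
   multiplying these factors along the path gives the bound. *)

Section RootedTree.
Variables (V : finType) (root : V) (pa : V -> V).
Hypothesis tree : is_rooted_tree root pa.

Lemma iter_pa_root k : iter k pa root = root.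
Proof. by case: tree => pa_root _; elim: k => //= k ->. Qed.

Lemma pa_cycle_root m x : iter m.+1 pa x = x -> x = root.
Proof.
move=> cyc; have [k reach] := tree.2 x.
have iter_cyc q : iter (q * m.+1) pa x = x.
  by elim: q => // q IHq; rewrite mulSn iterD IHq cyc.
by rewrite -(iter_cyc k) -(subnK (leq_pmulr k (ltn0Sn m))) iterD reach iter_pa_root.
Qed.

Lemma iter_pa_child_inj a p q :
  iter p pa a != root -> iter q pa a != root ->
  iter p.+1 pa a = iter q.+1 pa a -> p = q.
Proof.
wlog le_pq : p q / (p <= q)%N.
  by move=> W ? ? E; case: (leqP p q) => [|/ltnW] le; [exact: W | exact/esym/W].
move=> _ q_root E; apply/eqP; rewrite eqn_leq le_pq /=.
apply: contraNT q_root; rewrite -ltnNge => lt_pq.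
have cyc : iter (q - p).-1.+1 pa (iter p.+1 pa a) = iter p.+1 pa a.
  by rewrite prednK ?subn_gt0 // -iterD addnS subnK // ltnW.
by rewrite -(subnK lt_pq) iterD (pa_cycle_root cyc) iter_pa_root.
Qed.

Definition descendants (j : V) : {set V} := [set a | fconnect pa a j].

Lemma descendants_refl j : j \in descendants j.
Proof. by rewrite inE connect0. Qed.

Lemma iter_descendants a j : a \in descendants j -> exists m, iter m pa a = j.
Proof. by rewrite inE => /iter_findex; eexists; eassumption. Qed.

Lemma descendants_child_sub c j :
  c \in ch root pa j -> descendants c \subset descendants j.
Proof.
rewrite inE => /andP[_ /eqP <-]; apply/subsetP => a; rewrite !inE => ac.
exact: connect_trans ac (fconnect1 _ _).
Qed.

Lemma descendants_child_proper c j :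
  c \in ch root pa j -> descendants c \proper descendants j.
Proof.
move=> cj; rewrite properE descendants_child_sub //=.
apply/subsetPn; exists j; first exact: descendants_refl.
apply/negP => /iter_descendants[m jc]; move: cj; rewrite inE => /andP[+ /eqP pc].
by rewrite (@pa_cycle_root m c) ?eqxx // iterSr pc.
Qed.

End RootedTree.

Lemma down_ind (P : nat -> Prop) lo hi :
  P hi -> (forall i, lo <= i < hi -> P i.+1 -> P i) -> forall i, lo <= i <= hi -> P i.
Proof.
move=> P_hi P_step i /andP[lo_i i_hi]; have [d] : exists d, d = hi - i by exists (hi - i).
elim: d i lo_i i_hi => [|d IHd] i lo_i i_hi d_eq; first by have -> : i = hi by lia.
by apply: P_step; [lia | apply: IHd; lia].
Qed.

Section RootPath.
Variables (V : finType) (root : V) (pa : V -> V) (L : nat) (psi : nat -> V).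
Hypotheses (tree : is_rooted_tree root pa)
  (psi_path : forall k, (1 <= k < L)%N -> pa (psi k.+1) = psi k /\ psi k.+1 != root).

Lemma iter_path m : (m < L)%N -> iter m pa (psi L) = psi (L - m).
Proof.
elim: m => [|m IHm] lt_mL; first by rewrite subn0.
rewrite iterS IHm 1?ltnW // -subnSK 1?ltnW //.
by have /psi_path[-> _] : 1 <= L - m.+1 < L by lia.
Qed.

Lemma path_end_off_descendants i l :
  (1 <= i < L)%N -> l \in ch root pa (psi i) -> l != psi i.+1 ->
  psi L \notin descendants pa l.
Proof.
move=> i_range + l_q; rewrite inE => /andP[l_root /eqP pa_l].
apply/negP => /iter_descendants[m end_l].
have [pa_q q_root] := psi_path i_range.
have end_q : iter (L - i.+1) pa (psi L) = psi i.+1.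
  by rewrite iter_path ?subKn //; lia.
have m_eq : m = (L - i.+1)%N.
  apply: (iter_pa_child_inj tree (a := psi L)); rewrite ?end_l ?end_q //.
  by rewrite !iterS end_l end_q pa_l pa_q.
by move: l_q; rewrite -end_l m_eq end_q eqxx.
Qed.

End RootPath.

Local Open Scope ring_scope.

Lemma tilde_precisionE (R : realFieldType) (a x : R) : 0 < a -> 0 <= x ->
  (if x == 0 then 0 else (a + x^-1)^-1) = a^-1 - (a ^+ 2 * (a^-1 + x))^-1.
Proof.
move=> a_gt0 x_ge0; have a_neq0 : a != 0 by rewrite gt_eqF.
case: eqP => [->|/eqP x_neq0]; first by rewrite addr0 expr2 mulfK ?subrr.
have ax_gt0 : 0 < a * x by rewrite mulr_gt0 // lt_def x_neq0.
field; rewrite a_neq0 x_neq0 /= andbT gt_eqF //; lra.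
Qed.

Lemma tprec_increment_ge (R : realFieldType) (a h h' c : R) :
  0 < a -> 0 < h -> 0 < c -> h <= h' -> h' <= c * h ->
  c^-1 * (h^-1 / a) ^+ 2 * (h' - h)
    <= (a^-1 - (a ^+ 2 * h')^-1) - (a^-1 - (a ^+ 2 * h)^-1).
Proof.
move=> a_gt0 h_gt0 c_gt0 le_hh' le_h'ch; have h'_gt0 : 0 < h' by apply: lt_le_trans h_gt0 le_hh'.
rewrite -subr_ge0.
have -> : a^-1 - (a ^+ 2 * h')^-1 - (a^-1 - (a ^+ 2 * h)^-1)
          - c^-1 * (h^-1 / a) ^+ 2 * (h' - h)
        = (h' - h) * (c * h - h') / (c * a ^+ 2 * h ^+ 2 * h').
  by field; rewrite !gt_eqF.
by rewrite divr_ge0 ?mulr_ge0 ?subr_ge0 // ltW.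
Qed.

Section Precisions.
Variables (R : realFieldType) (V : finType) (root : V) (pa : V -> V).
Variables (s0 : V -> R) (s : R).
Hypotheses (tree : is_rooted_tree root pa) (s0_gt0 : forall i, 0 < s0 i) (s_gt0 : 0 < s).

Local Notation tp := (tprec root pa s0 s).
Local Notation hp := (hprec root pa s0 s).

Lemma tprec_ge0 n k j : 0 <= tp n k j.
Proof.
elim: k j => [|k IHk] j //=; have s0j := s0_gt0 j.
case: ifP => _; case: eqP => // _; rewrite invr_ge0 ltW // ltr_wpDr //.
  by rewrite divr_ge0 // ltW.
by rewrite invr_ge0 sumr_ge0.
Qed.

Lemma tprec_local n n' k l :
  {in descendants pa l, n =1 n'} -> tp n k l = tp n' k l.
Proof.
elim: k l => [|k IHk] l nn' //=; rewrite nn' ?descendants_refl //.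
case: ifP => // _; congr (if _ == 0 then 0 else (_ + _^-1)^-1);
by apply: eq_bigr => c cl; exact/IHk/(sub_in1 (subsetP (descendants_child_sub cl)) nn').
Qed.

Lemma tprec_fuel n k k' j :
  (#|descendants pa j| <= k)%N -> (#|descendants pa j| <= k')%N -> tp n k j = tp n k' j.
Proof.
have desc_gt0 i : (0 < #|descendants pa i|)%N.
  by apply/card_gt0P; exists i; exact: descendants_refl.
elim: k k' j => [|k IHk] [|k'] j desc_k desc_k' //=;
  try by move: (desc_gt0 j); rewrite lt0n -leqn0 ?desc_k ?desc_k'.
case: ifP => // _; congr (if _ == 0 then 0 else (_ + _^-1)^-1);
  apply: eq_bigr => c cj; have lt_cj := proper_card (descendants_child_proper tree cj);
  by apply: IHk; rewrite -ltnS (leq_trans lt_cj).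
Qed.

Lemma hprec_ge_prior n j : (s0 j)^-1 <= hp n j.
Proof.
rewrite /hprec; case: ifP => _; rewrite lerDl.
  by rewrite divr_ge0 // ltW.
by apply: sumr_ge0 => l _; exact: tprec_ge0.
Qed.

Lemma hprec_gt0 n j : 0 < hp n j.
Proof. by apply: lt_le_trans (hprec_ge_prior n j); rewrite invr_gt0. Qed.

Lemma tprecE n j : tp n #|V| j = (s0 j)^-1 - (s0 j ^+ 2 * hp n j)^-1.
Proof.
have V_gt0 : (0 < #|V|)%N by apply/card_gt0P; exists j.
rewrite -[in LHS](prednK V_gt0) /= /hprec; case: ifP => _.
  have -> : (n j == 0%N) = ((n j)%:R / s == 0).
    by rewrite mulf_eq0 invr_eq0 (gt_eqF s_gt0) orbF pnatr_eq0.
  by rewrite -[s / _]invf_div tilde_precisionE // divr_ge0 // ltW.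
have -> : \sum_(l in ch root pa j) tp n #|V|.-1 l = \sum_(l in ch root pa j) tp n #|V| l.
  apply: eq_bigr => l lj; apply: tprec_fuel; last exact: max_card.
  have lt_lj := proper_card (descendants_child_proper tree lj).
  by rewrite -ltnS prednK // (leq_trans lt_lj) ?max_card.
by rewrite tilde_precisionE // sumr_ge0 // => l _; exact: tprec_ge0.
Qed.

Lemma hprec_sub_child n n' i q :
  ~~ is_leaf root pa i -> q \in ch root pa i ->
  (forall l, l \in ch root pa i -> l != q -> {in descendants pa l, n =1 n'}) ->
  hp n' i - hp n i = tp n' #|V| q - tp n #|V| q.
Proof.
move=> /negbTE internal qi off_q; rewrite /hprec internal !(bigD1 q qi) /=.
rewrite (eq_bigr (fun l => tp n #|V| l)) => [|l /andP[li lq]]; first by ring.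
by rewrite (tprec_local _ (off_q l li lq)).
Qed.

End Precisions.

Lemma geometric_bound_step (R : realFieldType) (c : R) (f : nat -> R) (i L : nat) :
  (i < L)%N ->
  (c ^+ (L - i))^-1 * \prod_(i.+1 <= j < L.+1) f j
    = c^-1 * f i.+1 * ((c ^+ (L - i.+1))^-1 * \prod_(i.+2 <= j < L.+1) f j).
Proof.
by move=> lt_iL; rewrite (@big_ltn _ _ _ i.+1) // -(subnSK lt_iL) exprS invfM; ring.
Qed.

Section PrecisionGain.
Variables (R : realFieldType) (V : finType) (root : V) (pa : V -> V).
Variables (s0 : V -> R) (s c : R) (L : nat) (psi : nat -> V) (n n' : V -> nat).
Hypotheses (tree : is_rooted_tree root pa) (s0_gt0 : forall i, 0 < s0 i) (s_gt0 : 0 < s).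
Hypotheses (psi_path : forall k, (1 <= k < L)%N -> pa (psi k.+1) = psi k /\ psi k.+1 != root)
  (leaf_end : is_leaf root pa (psi L)).
Hypotheses (n_succ : forall a, n' a = (n a + (psi L == a))%N)
  (c_gt0 : 0 < c) (hprec_le : forall j, hprec root pa s0 s n' j <= c * hprec root pa s0 s n j).

Local Notation hp := (hprec root pa s0 s).

Lemma hprec_gain_leaf : hp n' (psi L) - hp n (psi L) = s^-1.
Proof. by rewrite /hprec leaf_end n_succ eqxx addn1 -natr1; ring. Qed.

Lemma hprec_gain_step i : (1 <= i < L)%N -> hp n (psi i.+1) <= hp n' (psi i.+1) ->
  c^-1 * ((hp n (psi i.+1))^-1 / s0 (psi i.+1)) ^+ 2 * (hp n' (psi i.+1) - hp n (psi i.+1))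
    <= hp n' (psi i) - hp n (psi i).
Proof.
move=> i_range mono; have [pa_q q_root] := psi_path i_range.
have q_child : psi i.+1 \in ch root pa (psi i) by rewrite inE q_root pa_q eqxx.
have internal : ~~ is_leaf root pa (psi i) by apply/set0Pn; exists (psi i.+1).
rewrite (hprec_sub_child s0 s internal q_child) => [|l l_child l_q a a_desc]; last first.
  rewrite n_succ (_ : (psi L == a) = false) ?addn0 //.
  by apply: contraNF (path_end_off_descendants tree psi_path i_range l_child l_q) => /eqP ->.
by rewrite !tprecE //; apply: tprec_increment_ge; rewrite ?hprec_gt0.
Qed.

Lemma hprec_gain_path i : (1 <= i <= L)%N ->
  (c ^+ (L - i))^-1 * (\prod_(i.+1 <= j < L.+1) ((hp n (psi j))^-1 / s0 (psi j)) ^+ 2) * s^-1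
    <= hp n' (psi i) - hp n (psi i).
Proof.
move: i; apply: down_ind => [|i i_range IHi].
  by rewrite subnn expr0 invr1 big_geq // !mul1r hprec_gain_leaf.
have bound_ge0 : 0 <= (c ^+ (L - i.+1))^-1
    * (\prod_(i.+2 <= j < L.+1) ((hp n (psi j))^-1 / s0 (psi j)) ^+ 2) * s^-1.
  by rewrite !mulr_ge0 ?invr_ge0 ?exprn_ge0 ?prodr_ge0 // ?ltW // => j _; exact: sqr_ge0.
rewrite geometric_bound_step; last by case/andP: i_range.
rewrite -mulrA; apply: le_trans (hprec_gain_step i_range _).
  by apply: ler_wpM2l IHi; rewrite mulr_ge0 ?sqr_ge0 // invr_ge0 ltW.
by rewrite -subr_ge0 (le_trans bound_ge0).
Qed.

End PrecisionGain.

Theorem lemma3 (R : realFieldType) (V : finType) (root : V) (pa : V -> V)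
  (s0 : V -> R) (s : R) (c : R) (A : nat -> V)
  (Htree : is_rooted_tree root pa)
  (Hint : internal_ge2 root pa)
  (Hs0 : forall i : V, 0 < s0 i)
  (Hs : 0 < s)
  (HA : forall t : nat, is_leaf root pa (A t))
  (Hc : 0 < c)
  (Hcond : forall (t : nat) (i : V),
      hprec root pa s0 s (pulls A t.+1) i <= c * hprec root pa s0 s (pulls A t) i)
  (t : nat) (L : nat) (psi : nat -> V)
  (HL : (1 <= L)%N)
  (Hpsi1 : psi 1%N = root)
  (HpsiL : psi L = A t)
  (Hpsi : forall k : nat, (1 <= k < L)%N ->
      pa (psi k.+1) = psi k /\ psi k.+1 != root) :
  forall i : nat, (1 <= i <= L)%N ->
    hprec root pa s0 s (pulls A t.+1) (psi i) - hprec root pa s0 s (pulls A t) (psi i)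
    >= (c ^+ (L - i))^-1
       * (\prod_(i.+1 <= j < L.+1)
            ((hprec root pa s0 s (pulls A t) (psi j))^-1 / s0 (psi j)) ^+ 2)
       * s^-1.
Proof.
have pulls_succ a : pulls A t.+1 a = (pulls A t a + (psi L == a))%N.
  by rewrite HpsiL /pulls big_ord_recr.
have leaf_end : is_leaf root pa (psi L) by rewrite HpsiL.
exact: hprec_gain_path Htree Hs0 Hs Hpsi leaf_end pulls_succ Hc (Hcond t).
Qed.
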